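(* Let $D_+, D_-$ be a pair of SBP operators of order $q\ge1$ on $[a,b]$ with associated data $H,S,\mathbf{p}_0,\mathbf{p}_n,\mathbf{x}$, and let $\tilde D_+ = D_+ + H^{-1}\mathbf{p}_0\mathbf{p}_0^\top$. Let $(\lambda,\mathbf{w})$ be an eigenpair of $\tilde D_+$ (over $\mathbb{C}$) with $\operatorname{Re}(\lambda)=0$. Then $\lambda$ is a normal eigenvalue of $\tilde D_+$ with respect to the inner product $\langle \mathbf{f},\mathbf{g}\rangle = \mathbf{f}^* H\mathbf{g}$, i.e.: (a) every eigenvector of $\tilde D_+$ corresponding to $\lambda$ is $\langle\cdot,\cdot\rangle$-orthogonal to every eigenvector of $\tilde D_+$ corresponding to any eigenvalue $\mu\ne\lambda$; and (b) the algebraic multiplicity of $\lambda$ equals its geometric multiplicity.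
   Context: Let $[a,b]$ be an interval with $b>a$ and $n\ge 1$. For $\mathbf{x}\in\mathbb{R}^{n+1}$, $\mathbf{x}^j$ denotes elementwise exponentiation, with $\mathbf{x}^0=\mathbf{1}=(1,\dots,1)^\top$. Matrices $D_+, D_-\in\mathbb{R}^{(n+1)\times(n+1)}$ form a pair of SBP (summation-by-parts) operators of order $q\ge 1$ on $[a,b]$ if there exist matrices $H,S\in\mathbb{R}^{(n+1)\times(n+1)}$ and vectors $\mathbf{p}_0,\mathbf{p}_n,\mathbf{x}\in\mathbb{R}^{n+1}$ such that: (A) $D_\pm \mathbf{x}^j = j\mathbf{x}^{j-1}$, $\mathbf{p}_0^\top\mathbf{x}^j = a^j$, $\mathbf{p}_n^\top \mathbf{x}^j = b^j$ for $j=0,\dots,q$ (with $0\cdot\mathbf{x}^{-1}:=\mathbf{0}$); (B) $H=H^\top$ is positive definite; (C) $HD_+ + D_+^\top H = -\mathbf{p}_0\mathbf{p}_0^\top + \mathbf{p}_n\mathbf{p}_n^\top + S$ with $S=S^\top$ positive semidefinite; (D) $HD_+ + D_-^\top H = -\mathbf{p}_0\mathbf{p}_0^\top + \mathbf{p}_n\mathbf{p}_n^\top$; (E) $\mathbf{x}=(x_0,\dots,x_n)^\top$ with $x_i\ne x_j$ for $i\ne j$. The superscript $*$ denotes conjugate transpose. *)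

From HB Require Import structures.
From mathcomp Require Import all_boot all_order all_algebra.
Set Implicit Arguments. Unset Strict Implicit. Unset Printing Implicit Defensive.
Import Order.TTheory GRing.Theory Num.Theory.
Local Open Scope ring_scope.

(* Real-valued data are represented inside a numeric closed field C
   (e.g. algC, or complex R) with all entries required to be real. *)

Definition real_mx (C : numClosedFieldType) m k (A : 'M[C]_(m, k)) : Prop :=
  forall i j, A i j \is Num.real.

Definition xpow (C : numClosedFieldType) m (x : 'cV[C]_m) (j : nat) : 'cV[C]_m :=
  \col_i (x i 0 ^+ j).

Definition ctr (C : numClosedFieldType) m k (A : 'M[C]_(m, k)) : 'M[C]_(k, m) :=
  (map_mx Num.conj A)^T.

Definition posdef (C : numClosedFieldType) m (H : 'M[C]_m) : Prop :=
  forall v : 'cV[C]_m, real_mx v -> v != 0 -> 0 < (v^T *m H *m v) 0 0.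
Definition psd (C : numClosedFieldType) m (S : 'M[C]_m) : Prop :=
  forall v : 'cV[C]_m, real_mx v -> 0 <= (v^T *m S *m v) 0 0.

Definition SBP_pair (C : numClosedFieldType) (n q : nat) (a b : C)
  (Dp Dm H S : 'M[C]_n.+1) (p0 pn x : 'cV[C]_n.+1) : Prop :=
  (real_mx Dp /\ real_mx Dm /\ real_mx H /\ real_mx S /\
   real_mx p0 /\ real_mx pn /\ real_mx x) /\
  [/\
      (forall j, (j <= q)%N ->
         [/\ Dp *m xpow x j = j%:R *: xpow x j.-1,
             Dm *m xpow x j = j%:R *: xpow x j.-1,
             p0^T *m xpow x j = (a ^+ j)%:M &
             pn^T *m xpow x j = (b ^+ j)%:M]),
      H^T = H /\ posdef H,
      H *m Dp + Dp^T *m H = - (p0 *m p0^T) + pn *m pn^T + S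
                /\ S^T = S /\ psd S,
      H *m Dp + Dm^T *m H = - (p0 *m p0^T) + pn *m pn^T &
      (forall i j : 'I_n.+1, i != j -> x i 0 != x j 0)].

(* geometric multiplicity of an eigenvalue of a square matrix (column convention) *)
Definition geom_mult (C : numClosedFieldType) m (A : 'M[C]_m) (l : C) : nat :=
  (m - \rank (A - l%:M)%R)%N.

Definition alg_mult (C : numClosedFieldType) m (A : 'M[C]_m) (l : C) : nat :=
  mup l (char_poly A).

From HB Require Import structures.
From mathcomp Require Import all_boot all_order all_algebra.
From mathcomp Require Import ring zify.
Import Order.TTheory GRing.Theory Num.Theory.
Local Open Scope ring_scope.
Set Implicit Arguments. Unset Strict Implicit. Unset Printing Implicit Defensive.

(* Put K = H Dt.  Condition (C) gives K + K^T = p0 p0^T + pn pn^T + S, which is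
   positive semidefinite.  If Dt z = lam z with Re lam = 0, then
   z^* (K + K^T) z = 2 Re(lam) z^* H z = 0, so (K + K^T) z = 0 and z^* H is a left
   eigenvector: z^* H Dt = lam z^* H.  Pairing it with an eigenvector for mu != lam
   gives (a).  For a Jordan chain z = (Dt - lam) y it gives
   z^* H z = z^* H (Dt - lam) y = 0, hence z = 0: Dt - lam has ascent at most one,
   and for such an eigenvalue algebraic and geometric multiplicities agree
   (split off an eigenvector and induct on the dimension). *)

Section SemisimpleEigenvalue.
Variable F : fieldType.

(* [ker B^2 = ker B] for left kernels, following MathComp's row-vector convention *)
Definition ascent_le1 m (B : 'M[F]_m) : Prop :=
  forall u : 'rV_m, u *m B *m B = 0 -> u *m B = 0.

Lemma ascent_le1_conj m (R B : 'M[F]_m) :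
  R \in unitmx -> ascent_le1 B -> ascent_le1 (R *m B *m invmx R).
Proof.
move=> Ru hB u; rewrite !mulmxA mulmxKV // => uBB.
have -> : u *m R *m B = 0.
  by apply: hB; rewrite -(mulmxKV Ru (u *m R *m B *m B)) uBB mul0mx.
by rewrite mul0mx.
Qed.

Lemma char_poly_conj m (R A : 'M[F]_m) :
  R \in unitmx -> char_poly (R *m A *m invmx R) = char_poly A.
Proof.
move=> Ru; rewrite /char_poly /char_poly_mx.
set mR := map_mx polyC R; set mRi := map_mx polyC (invmx R).
have mRK : mR *m mRi = 1%:M by rewrite -map_mxM mulmxV // map_mx1.
have -> : 'X%:M - map_mx polyC (R *m A *m invmx R) =
          mR *m ('X%:M - map_mx polyC A) *m mRi.
  rewrite mulmxBr mulmxBl !map_mxM -/mR -/mRi mul_mx_scalar -scalemxAl mRK.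
  by rewrite scalemx1.
by rewrite !det_mulmx mulrC mulrA -det_mulmx -map_mxM mulVmx // map_mx1 det1 mul1r.
Qed.

Lemma mxrank_conj m (R B : 'M[F]_m) :
  R \in unitmx -> \rank (R *m B *m invmx R) = \rank B.
Proof.
move=> Ru; rewrite mxrankMfree ?row_free_unit ?unitmx_inv //.
apply/eqP; rewrite eqn_leq mxrankM_maxr /=.
by rewrite -{1}(mulKmx Ru B) mxrankM_maxr.
Qed.

Lemma char_poly_tr m (A : 'M[F]_m) : char_poly A^T = char_poly A.
Proof.
rewrite /char_poly -det_tr /char_poly_mx; congr (\det _).
by apply/matrixP => i j; rewrite !mxE eq_sym.
Qed.

Lemma char_poly_lblock_scalar n (l : F) (X : 'M[F]_(n, 1)) (E : 'M[F]_n) :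
  char_poly (block_mx (l%:M : 'M_1) 0 X E) = ('X - l%:P) * char_poly E.
Proof.
rewrite /char_poly /char_poly_mx (scalar_mx_block 1 n) map_block_mx map_mx0.
by rewrite opp_block_mx add_block_mx oppr0 addr0 det_lblock det_mx11 !mxE mulr1n.
Qed.

Lemma eigenvector_lblock n (A : 'M[F]_(1 + n)) (l : F) (v : 'rV_(1 + n)) :
  v != 0 -> v *m A = l *: v ->
  exists2 R, R \in unitmx &
    exists X E, R *m A *m invmx R = block_mx (l%:M : 'M_1) 0 X E.
Proof.
move=> vnz vA; pose R := row_ebase v; have Ru : R \in unitmx := row_ebase_unit v.
have [c cu ev] : exists2 c, c \in unitmx & v = c *m pid_mx 1 *m R.
  exists (col_ebase v); first exact: col_ebase_unit.
  by rewrite -{1}(mulmx_ebase v) rank_rV vnz /=.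
set M := R *m A *m invmx R.
have eM : (pid_mx 1 : 'rV_(1 + n)) *m M = l *: pid_mx 1.
  apply: (can_inj (mulKmx cu)); move: vA; rewrite ev !mulmxA => ->.
  by rewrite -scalemxAl mulmxK // scalemxAr.
have [Mul Mur] : ulsubmx M = l%:M /\ ursubmx M = 0.
  move: eM; rewrite -{1}(submxK M) pid_mx_row mul_row_block !mul1mx !mul0mx.
  by rewrite !addr0 scale_row_mx scalemx1 scaler0 => /eq_row_mx.
by exists R => //; exists (dlsubmx M), (drsubmx M); rewrite -Mul -Mur submxK.
Qed.

Lemma ascent_le1_lblock0 n (X : 'M[F]_(n, 1)) (G : 'M[F]_n) :
  ascent_le1 (block_mx (0 : 'M_1) 0 X G) ->
  ascent_le1 G /\ \rank (block_mx (0 : 'M_1) 0 X G) = \rank G.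
Proof.
set B := block_mx _ _ _ _ => hB.
have mulB (p : 'rV_1) (u : 'rV_n) : row_mx p u *m B = row_mx (u *m X) (u *m G).
  by rewrite mul_row_block !mulmx0 !add0r.
have kerGX (u : 'rV_n) : u *m G = 0 -> u *m X = 0.
  move=> uG; have := hB (row_mx 0 u); rewrite !mulB uG !mul0mx row_mx0.
  by move=> /(_ erefl) /eqP; rewrite row_mx_eq0 => /andP [/eqP].
split=> [u uGG|].
  have := hB (row_mx 0 u); rewrite !mulB uGG kerGX // row_mx0.
  by move=> /(_ erefl) /eqP; rewrite row_mx_eq0 => /andP [_ /eqP].
have -> : \rank B = \rank (row_mx X G).
  by rewrite /B block_mxEv row_mx0 rank_col_0mx.
have kerXG : (kermx (row_mx X G) == kermx G)%MS.
  apply/andP; split; apply/sub_kermxP.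
    apply/eqP; have /eqP := mulmx_ker (row_mx X G).
    by rewrite mul_mx_row row_mx_eq0 => /andP [].
  rewrite mul_mx_row mulmx_ker; apply/eqP; rewrite -row_mx0; apply/eqP.
  congr row_mx; apply/row_matrixP => i; rewrite row_mul row0 kerGX //.
  by rewrite -row_mul mulmx_ker row0.
have := eqmx_rank kerXG; rewrite !mxrank_ker.
by have := rank_leq_row (row_mx X G); have := rank_leq_row G; lia.
Qed.

Lemma mup_char_poly_ascent_le1 m (A : 'M[F]_m) (l : F) :
  ascent_le1 (A - l%:M) -> mup l (char_poly A) = (m - \rank (A - l%:M)%R)%N.
Proof.
elim: m A => [|n IH] A hA.
  by rewrite /char_poly det_mx00 mupNroot // /root hornerC oner_eq0.
have [/eigenvalueP [v vA vnz] | nev] := boolP (eigenvalue A l); last first.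
  rewrite mupNroot -?eigenvalue_root_char //.
  move: nev; rewrite /eigenvalue /eigenspace negbK kermx_eq0 row_free_unit.
  by move=> /mxrank_unit ->; rewrite subnn.
have [R Ru [X [E eA]]] := @eigenvector_lblock n A l v vnz vA.
have eB : R *m (A - l%:M) *m invmx R = block_mx (0 : 'M_1) 0 X (E - l%:M).
  rewrite mulmxBr mulmxBl eA mul_mx_scalar -scalemxAl mulmxV // scalemx1.
  by rewrite (scalar_mx_block 1 n) opp_block_mx add_block_mx subrr !oppr0 !addr0.
have [hE rkE] : ascent_le1 (E - l%:M) /\
                \rank (block_mx (0 : 'M_1) 0 X (E - l%:M)) = \rank (E - l%:M).
  by apply: ascent_le1_lblock0; rewrite -eB; apply: ascent_le1_conj.
rewrite -(char_poly_conj A Ru) eA char_poly_lblock_scalar.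
rewrite mupM ?polyXsubC_eq0 ?monic_neq0 ?char_poly_monic //.
rewrite -[('X - l%:P)]expr1 mup_XsubCX eqxx IH // -(mxrank_conj _ Ru) eB rkE.
by have := rank_leq_row (E - l%:M); lia.
Qed.
End SemisimpleEigenvalue.

Section RealForms.
Variable C : numClosedFieldType.
Implicit Types (m k p : nat).

Lemma real_mxM m k p (A : 'M[C]_(m, k)) (B : 'M[C]_(k, p)) :
  real_mx A -> real_mx B -> real_mx (A *m B).
Proof. by move=> rA rB i j; rewrite !mxE; apply: rpred_sum => l _; apply: rpredM. Qed.

Lemma real_mxD m k (A B : 'M[C]_(m, k)) :
  real_mx A -> real_mx B -> real_mx (A + B).
Proof. by move=> rA rB i j; rewrite !mxE; apply: rpredD. Qed.

Lemma real_mxB m k (A B : 'M[C]_(m, k)) :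
  real_mx A -> real_mx B -> real_mx (A - B).
Proof. by move=> rA rB i j; rewrite !mxE; apply: rpredB. Qed.

Lemma real_mxT m k (A : 'M[C]_(m, k)) : real_mx A -> real_mx A^T.
Proof. by move=> rA i j; rewrite mxE. Qed.

Lemma real_mxZ m k (c : C) (A : 'M[C]_(m, k)) :
  c \is Num.real -> real_mx A -> real_mx (c *: A).
Proof. by move=> rc rA i j; rewrite mxE; apply: rpredM. Qed.

Lemma real_delta_mx m k (i0 : 'I_m) (j0 : 'I_k) :
  real_mx (delta_mx i0 j0 : 'M[C]_(m, k)).
Proof. by move=> i j; rewrite mxE realn. Qed.

Lemma ctrM m k p (A : 'M[C]_(m, k)) (B : 'M[C]_(k, p)) :
  ctr (A *m B) = ctr B *m ctr A.
Proof. by rewrite /ctr map_mxM trmx_mul. Qed.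

Lemma ctrD m k (A B : 'M[C]_(m, k)) : ctr (A + B) = ctr A + ctr B.
Proof. by apply/matrixP => i j; rewrite !mxE rmorphD. Qed.

Lemma ctrZ m k (c : C) (A : 'M[C]_(m, k)) : ctr (c *: A) = c^* *: ctr A.
Proof. by apply/matrixP => i j; rewrite !mxE rmorphM. Qed.

Lemma ctr_real m k (A : 'M[C]_(m, k)) : real_mx A -> ctr A = A^T.
Proof. by move=> rA; apply/matrixP => i j; rewrite !mxE conj_Creal. Qed.

Definition re_mx m k (A : 'M[C]_(m, k)) := map_mx (fun z => 'Re z) A.
Definition im_mx m k (A : 'M[C]_(m, k)) := map_mx (fun z => 'Im z) A.

Lemma real_re_mx m k (A : 'M[C]_(m, k)) : real_mx (re_mx A).
Proof. by move=> i j; rewrite mxE Creal_Re. Qed.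

Lemma real_im_mx m k (A : 'M[C]_(m, k)) : real_mx (im_mx A).
Proof. by move=> i j; rewrite mxE Creal_Im. Qed.

Lemma re_im_mx m k (A : 'M[C]_(m, k)) : A = re_mx A + 'i *: im_mx A.
Proof. by apply/matrixP => i j; rewrite !mxE -Crect. Qed.

Definition qf m (T : 'M[C]_m) (v : 'cV[C]_m) : C := (v^T *m T *m v) 0 0.

Lemma qfD m (T U : 'M[C]_m) (v : 'cV[C]_m) : qf (T + U) v = qf T v + qf U v.
Proof. by rewrite /qf mulmxDr mulmxDl mxE. Qed.

Lemma qf_outer_ge0 m (p v : 'cV[C]_m) :
  real_mx p -> real_mx v -> 0 <= qf (p *m p^T) v.
Proof.
move=> rp rv; have pv_real : (p^T *m v) 0 0 \is Num.real.
  exact: (real_mxM (real_mxT rp) rv).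
have -> : qf (p *m p^T) v = (p^T *m v) 0 0 ^+ 2.
  rewrite /qf !mulmxA -mulmxA mxE big_ord1 expr2; congr (_ * _).
  by rewrite !mxE; apply: eq_bigr => i _; rewrite !mxE mulrC.
by rewrite -real_normK // exprn_ge0.
Qed.

Section RealSymmetric.
Variables (m : nat) (T : 'M[C]_m).
Hypothesis T_sym : T^T = T.

Lemma bilin_sym (u v : 'cV[C]_m) : (u^T *m T *m v) 0 0 = (v^T *m T *m u) 0 0.
Proof.
have tr11 (A : 'M[C]_1) : A^T 0 0 = A 0 0 by rewrite mxE.
by rewrite -[LHS]tr11 !trmx_mul trmxK T_sym mulmxA.
Qed.

Lemma cform_re_im (w : 'cV[C]_m) :
  (ctr w *m T *m w) 0 0 = qf T (re_mx w) + qf T (im_mx w).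
Proof.
set a := re_mx w; set b := im_mx w.
have -> : ctr w = a^T - 'i *: b^T.
  have [ra rb] := (real_re_mx w, real_im_mx w).
  by rewrite {1}(re_im_mx w) ctrD ctrZ !ctr_real // conjCi scaleNr.
have eba := bilin_sym b a.
rewrite [X in _ *m X](re_im_mx w) -/a -/b !mulmxBl !mulmxDr -!scalemxAl -!scalemxAr.
move: eba; rewrite /qf.
move: (a^T *m T *m a) (a^T *m T *m b) (b^T *m T *m a) (b^T *m T *m b) => Paa Pab Pba Pbb.
by rewrite !mxE => ->; rewrite mulrA -expr2 sqrCi; ring.
Qed.

Hypotheses (T_real : real_mx T) (T_psd : psd T).

Lemma psd_qf_eq0_bilin (a c : 'cV[C]_m) :
  real_mx a -> real_mx c -> qf T a = 0 -> (c^T *m T *m a) 0 0 = 0.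
Proof.
move=> ra rc qa; set be := (c^T *m T *m a) 0 0; set ga := qf T c.
have be_real : be \is Num.real.
  exact: (real_mxM (real_mxM (real_mxT rc) T_real) ra).
have ga_ge0 : 0 <= ga by apply: T_psd.
(* the form is negative at the real vector [(ga + 1) a - be c] unless [be = 0] *)
pose d := (ga + 1) *: a - be *: c.
have rd : real_mx d.
  apply: real_mxB; apply: real_mxZ => //.
  by apply: rpredD; [apply: ger0_real | apply: rpred1].
have qd : qf T d = - (be ^+ 2 * (ga + 2%:R)).
  rewrite /qf; have -> : d^T = (ga + 1) *: a^T - be *: c^T.
    by apply/matrixP => i j; rewrite !mxE.
  have eac := bilin_sym a c; rewrite /d !mulmxBl !mulmxBr -!scalemxAl -!scalemxAr.
  move: eac qa; rewrite /ga /be /qf.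
  move: (a^T *m T *m a) (a^T *m T *m c) (c^T *m T *m a) (c^T *m T *m c).
  move=> Paa Pac Pca Pcc.
  by rewrite !mxE => -> ->; ring.
have : be ^+ 2 * (ga + 2%:R) <= 0 by rewrite -oppr_ge0 -qd; apply: T_psd.
rewrite pmulr_lle0 ?ltr_wpDl ?ltr0Sn // => be2_le0.
by apply/eqP; rewrite -sqrf_eq0 eq_le be2_le0 -realEsqr.
Qed.

Lemma psd_qf_eq0 (a : 'cV[C]_m) : real_mx a -> qf T a = 0 -> T *m a = 0.
Proof.
move=> ra qa; apply/matrixP => j k; rewrite ord1 [RHS]mxE.
have := psd_qf_eq0_bilin ra (real_delta_mx j 0) qa.
by rewrite -mulmxA trmx_delta -rowE mxE.
Qed.

Lemma psd_cform_eq0 (w : 'cV[C]_m) : (ctr w *m T *m w) 0 0 = 0 -> T *m w = 0.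
Proof.
have [ra rb] := (real_re_mx w, real_im_mx w).
rewrite cform_re_im => /eqP; rewrite paddr_eq0 ?T_psd // => /andP [/eqP qa /eqP qb].
by rewrite [w]re_im_mx mulmxDr -scalemxAr !psd_qf_eq0 // scaler0 addr0.
Qed.
End RealSymmetric.

Lemma posdef_psd m (H : 'M[C]_m) : posdef H -> psd H.
Proof.
move=> Hpd v rv; have [->|vnz] := eqVneq v 0; last exact/ltW/Hpd.
by rewrite mulmx0 mxE.
Qed.

Lemma posdef_cform_eq0 m (H : 'M[C]_m) (w : 'cV[C]_m) :
  real_mx H -> H^T = H -> posdef H -> (ctr w *m H *m w) 0 0 = 0 -> w = 0.
Proof.
move=> rH sH Hpd; have Hpsd := posdef_psd Hpd.
have qf_eq0 (a : 'cV[C]_m) : real_mx a -> qf H a = 0 -> a = 0.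
  move=> ra qa; apply/eqP; apply: contraT => anz.
  by have := Hpd a ra anz; rewrite -/(qf H a) qa ltxx.
have [ra rb] := (real_re_mx w, real_im_mx w).
rewrite (cform_re_im sH) => /eqP; rewrite paddr_eq0 ?Hpsd // => /andP [/eqP qa /eqP qb].
by rewrite (re_im_mx w) (qf_eq0 _ ra qa) (qf_eq0 _ rb qb) scaler0 addr0.
Qed.

Lemma posdef_unitmx m (H : 'M[C]_m) :
  real_mx H -> H^T = H -> posdef H -> H \in unitmx.
Proof.
move=> rH sH Hpd; rewrite unitmxE unitfE; apply/negP => /det0P [v vnz vH].
suff /eqP : v^T = 0 by rewrite trmx_eq0 (negPf vnz).
apply: (posdef_cform_eq0 rH sH Hpd).
by rewrite -mulmxA -sH -trmx_mul vH trmx0 mulmx0 mxE.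
Qed.
End RealForms.

Section ImaginaryEigenvalue.
Variables (C : numClosedFieldType) (m : nat) (Dp H S : 'M[C]_m) (p0 pn : 'cV[C]_m).
Hypotheses (Dp_real : real_mx Dp) (H_real : real_mx H) (p0_real : real_mx p0)
  (pn_real : real_mx pn) (H_sym : H^T = H) (H_posdef : posdef H) (S_psd : psd S)
  (SBP_C : H *m Dp + Dp^T *m H = - (p0 *m p0^T) + pn *m pn^T + S).

Local Notation Dt := (Dp + invmx H *m p0 *m p0^T).

Let H_unit : H \in unitmx := posdef_unitmx H_real H_sym H_posdef.

Lemma mulmx_H_Dt : H *m Dt = H *m Dp + p0 *m p0^T.
Proof. by rewrite mulmxDr !mulmxA mulmxV // mul1mx. Qed.

Lemma real_H_Dt : real_mx (H *m Dt).
Proof.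
by rewrite mulmx_H_Dt; apply: real_mxD; apply: real_mxM => //; apply: real_mxT.
Qed.

Lemma sym_H_Dt : H *m Dt + (H *m Dt)^T = p0 *m p0^T + pn *m pn^T + S.
Proof.
rewrite mulmx_H_Dt linearD /= !trmx_mul !trmxK H_sym addrACA SBP_C.
by rewrite addrC !addrA addrK.
Qed.

Lemma psd_sym_H_Dt : psd (H *m Dt + (H *m Dt)^T).
Proof.
move=> v rv; rewrite sym_H_Dt -/(qf _ v) !qfD.
by rewrite !addr_ge0 ?qf_outer_ge0 //; apply: S_psd.
Qed.

Variable lam : C.
Hypothesis Re_lam : 'Re lam = 0.

Lemma imag_eigen_left (z : 'cV[C]_m) :
  Dt *m z = lam *: z -> ctr z *m H *m Dt = lam *: (ctr z *m H).
Proof.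
move=> Dz; set K := H *m Dt; set M := K + K^T.
have lam_conj : lam^* = - lam.
  move: Re_lam; rewrite ReE => /eqP; rewrite mulf_eq0 invr_eq0 pnatr_eq0 orbF.
  by rewrite addrC addr_eq0 => /eqP.
have Kz : K *m z = lam *: (H *m z) by rewrite -mulmxA Dz scalemxAr.
have zKT : ctr z *m K^T = - lam *: (ctr z *m H).
  by rewrite -(ctr_real real_H_Dt) -ctrM Kz ctrZ ctrM (ctr_real H_real) H_sym lam_conj.
have M_real : real_mx M.
  by apply: real_mxD; [apply: real_H_Dt | apply/real_mxT/real_H_Dt].
have M_sym : M^T = M by rewrite linearD /= trmxK addrC.
have Mz : M *m z = 0.
  apply: (psd_cform_eq0 M_sym M_real psd_sym_H_Dt).
  rewrite -mulmxA mulmxDl mulmxDr Kz mulmxA zKT -scalemxAl -scalemxAr mulmxA.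
  by rewrite -scalerDl addrN scale0r mxE.
have zM : ctr z *m M = 0.
  by rewrite -[M]M_sym -(ctr_real M_real) -ctrM Mz /ctr map_mx0 trmx0.
by move: zM; rewrite mulmxDr zKT scaleNr => /eqP; rewrite subr_eq0 mulmxA => /eqP.
Qed.

Lemma imag_eigen_H_orthogonal (v u : 'cV[C]_m) (mu : C) :
  Dt *m v = lam *: v -> Dt *m u = mu *: u -> mu != lam -> ctr v *m H *m u = 0.
Proof.
move=> Dv Du mu_neq; have := congr1 (mulmx^~ u) (imag_eigen_left Dv).
rewrite -mulmxA Du -scalemxAr -scalemxAl => /eqP; rewrite -subr_eq0 -scalerBl.
by rewrite scaler_eq0 subr_eq0 (negPf mu_neq) => /eqP.
Qed.

Lemma imag_eigen_ascent_le1 : ascent_le1 (Dt^T - lam%:M).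
Proof.
move=> u; set B := Dt - lam%:M.
have -> : Dt^T - lam%:M = B^T by rewrite linearB /= tr_scalar_mx.
set z := B *m u^T => uBB.
have Bz : B *m z = 0 by apply: trmx_inj; rewrite trmx0 !trmx_mul trmxK.
have Dz : Dt *m z = lam *: z.
  by apply/eqP; rewrite -subr_eq0 -mul_scalar_mx -mulmxBl -/B Bz.
suff z0 : z = 0 by rewrite -(trmxK u) -trmx_mul -/z z0 trmx0.
apply: posdef_cform_eq0 H_real H_sym H_posdef _.
rewrite {2}/z /B mulmxBl mulmxBr mulmxA (imag_eigen_left Dz) mul_scalar_mx.
by rewrite -scalemxAl -!mulmxA -!scalemxAr subrr mxE.
Qed.
End ImaginaryEigenvalue.

Theorem lemma3 (C : numClosedFieldType) (n q : nat) (a b : C)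
  (Dp Dm H S : 'M[C]_n.+1) (p0 pn x : 'cV[C]_n.+1)
  (lam : C) (w : 'cV[C]_n.+1) :
  (1 <= n)%N -> (1 <= q)%N ->
  a \is Num.real -> b \is Num.real -> a < b ->
  @SBP_pair C n q a b Dp Dm H S p0 pn x ->
  let Dt := Dp + invmx H *m p0 *m p0^T in
  w != 0 -> Dt *m w = lam *: w -> 'Re lam = 0 ->
  (forall (v u : 'cV[C]_n.+1) (mu : C),
      v != 0 -> Dt *m v = lam *: v ->
      u != 0 -> Dt *m u = mu *: u -> mu != lam ->
      ctr v *m H *m u = 0)
  /\ alg_mult Dt lam = geom_mult Dt lam.
Proof.
move=> _ _ _ _ _ [[rDp [_ [rH [_ [rp0 [rpn _]]]]]] [_ [Hsym Hpd] [hC [_ Spsd]] _ _]].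
move=> Dt _ _ Re_lam; split=> [v u mu _ Dv _ Du|].
  exact: (imag_eigen_H_orthogonal rDp rH rp0 rpn Hsym Hpd Spsd hC Re_lam Dv Du).
rewrite /alg_mult /geom_mult -char_poly_tr -mxrank_tr linearB /= tr_scalar_mx.
apply: (@mup_char_poly_ascent_le1 _ _ Dt^T lam).
exact: (imag_eigen_ascent_le1 rDp rH rp0 rpn Hsym Hpd Spsd hC Re_lam).
Qed.
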